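(* Let $(\mathcal{A},\mathcal{E})$ be an idempotent complete exact category with enough $\mathcal{E}$-projectives and $\mathcal{E}$-injectives, and let $\mathcal{T}\subseteq\mathcal{A}$. Then the following are equivalent: (a) $\mathcal{T}$ is Zhu-Zhuang $n$-tilting in $(\mathcal{A},\mathcal{E})$ and $\mathcal{T}$ is precovering in $\mathcal{T}^{\perp_{\mathcal{E}}}$; (b) $\mathcal{T}$ is small $n$-tilting in $(\mathcal{A},\mathcal{E})$; (c) $\mathcal{T}$ is Auslander-Solberg $n$-tilting in $(\mathcal{A},\mathcal{E})$ and $\mathcal{T}$ is precovering in $\mathcal{T}^{\perp_{\mathcal{E}}}$. Furthermore, if one of these conditions holds, then $\mathrm{Proj}_{\mathcal{E}}(\mathcal{A})\subseteq\mathcal{T}^{\vee}_{n,\mathcal{E}}$.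
   Context: $(\mathcal{A},\mathcal{E})$ is an exact category (in the sense of Quillen/Bühler): $\mathcal{A}$ additive, $\mathcal{E}$ a class of kernel–cokernel pairs (conflations, written $0\to X\to Y\to Z\to0$) satisfying the exact category axioms; it is idempotent complete if every idempotent has a kernel. $\mathrm{Proj}_{\mathcal{E}}(\mathcal{A})$ ($\mathrm{Inj}_{\mathcal{E}}(\mathcal{A})$): objects $P$ with $\mathrm{Hom}(P,-)$ (resp. $\mathrm{Hom}(-,P)$) exact on conflations; enough $\mathcal{E}$-projectives (injectives) means every object is the end (start) of a conflation with projective middle term (injective middle term). $\mathrm{Ext}^k_{\mathcal{A}}$ denotes the Ext groups of the exact category ($\mathrm{Ext}^1$ = classes of conflations, $\mathrm{Ext}^k(X,Y)\cong\mathrm{Ext}^1(X_{k-1},Y)$ for a $(k-1)$-th syzygy $X_{k-1}$ of $X$). $\mathcal{T}^{\perp_{\mathcal{E}}}=\{A:\mathrm{Ext}^i(T,A)=0\ \forall T\in\mathcal{T},i>0\}$. $\mathrm{pd}_{\mathcal{E}}(A)=\min\{n:\mathrm{Ext}^i(A,-)=0\ \forall i>n\}$, supremum for classes. $\mathrm{add}(\mathcal{T})$: direct summands of finite direct sums of objects of $\mathcal{T}$. $\mathcal{T}^{\vee}_{n,\mathcal{E}}$: objects $A$ admitting conflations $0\to K_i\to X_i\to K_{i+1}\to0$ ($0\le i\le m$, $m\le n$) with $K_0=A$, $K_{m+1}=0$, $X_i\in\mathcal{T}$; $\mathcal{T}^{\vee}_{\mathcal{E}}=\bigcup_n\mathcal{T}^{\vee}_{n,\mathcal{E}}$.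 $\omega$ is a relative $\mathcal{E}$-generator in a class $\mathcal{Y}$ if $\omega\subseteq\mathcal{Y}$ and every $Y\in\mathcal{Y}$ admits a conflation $0\to Y'\to W\to Y\to0$ with $W\in\omega$, $Y'\in\mathcal{Y}$. $\mathcal{T}$ is precovering in $\mathcal{Y}$ if every object of $\mathcal{Y}$ has a $\mathcal{T}$-precover ($f:T\to Y$, $T\in\mathcal{T}$, $\mathrm{Hom}(T',f)$ surjective for all $T'\in\mathcal{T}$). Small $n$-tilting: (TEC0) $\mathcal{T}=\mathrm{add}(\mathcal{T})$; (TEC1) $\mathrm{pd}_{\mathcal{E}}(\mathcal{T})\le n$; (TEC2) $\mathcal{T}\subseteq\mathcal{T}^{\perp_{\mathcal{E}}}$; (TEC3) some $\omega\subseteq\mathcal{T}^{\vee}_{\mathcal{E}}$ is a relative $\mathcal{E}$-generator in $\mathcal{A}$; (TEC4) $\mathcal{T}$ is precovering in $\mathcal{T}^{\perp_{\mathcal{E}}}$. Zhu-Zhuang $n$-tilting: $\mathcal{T}=\mathrm{add}(\mathcal{T})$, $\mathrm{pd}_{\mathcal{E}}(\mathcal{T})\le n$, and $\mathcal{T}$ is a relative $\mathcal{E}$-generator in $\mathcal{T}^{\perp_{\mathcal{E}}}$. Auslander-Solberg $n$-tilting: $\mathcal{T}=\mathrm{add}(\mathcal{T})$, $\mathrm{pd}_{\mathcal{E}}(\mathcal{T})\le n$, $\mathcal{T}\subseteq\mathcal{T}^{\perp_{\mathcal{E}}}$, and $\mathrm{Proj}_{\mathcal{E}}(\mathcal{A})\subseteq\mathcal{T}^{\vee}_{\mathcal{E}}$.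 *)

From HB Require Import structures.
From mathcomp Require Import all_boot all_algebra.
Set Implicit Arguments. Unset Strict Implicit. Unset Printing Implicit Defensive.
Import GRing.Theory.
Local Open Scope ring_scope.

Record PreAddCat := {
  obj :> Type;
  hom : obj -> obj -> zmodType;
  comp : forall X Y Z : obj, hom Y Z -> hom X Y -> hom X Z;
  idm : forall X : obj, hom X X;
  compA : forall X Y Z W (h : hom Z W) (g : hom Y Z) (f : hom X Y),
      comp h (comp g f) = comp (comp h g) f;
  comp1m : forall X Y (f : hom X Y), comp (idm Y) f = f;
  compm1 : forall X Y (f : hom X Y), comp f (idm X) = f;
  compDl : forall X Y Z (g g' : hom Y Z) (f : hom X Y),
      comp (g + g') f = comp g f + comp g' f;
  compDr : forall X Y Z (g : hom Y Z) (f f' : hom X Y),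
      comp g (f + f') = comp g f + comp g f';
}.
Arguments hom {C} : rename.
Arguments comp {C X Y Z} : rename.
Arguments idm {C} X : rename.

Section Defs.
Variable C : PreAddCat.

Definition is_zero_obj (Z : C) : Prop :=
  (forall X (f : hom Z X), f = 0) /\ (forall X (f : hom X Z), f = 0).

Definition is_iso (X Y : C) (f : hom X Y) : Prop :=
  exists g : hom Y X, comp g f = idm X /\ comp f g = idm Y.

Definition is_additive : Prop :=
  (exists Z : C, is_zero_obj Z) /\
  (forall X Y : C, exists (S : C) (i1 : hom X S) (i2 : hom Y S)
        (p1 : hom S X) (p2 : hom S Y),
      [/\ comp p1 i1 = idm X, comp p2 i2 = idm Y, comp p1 i2 = 0,
          comp p2 i1 = 0 & comp i1 p1 + comp i2 p2 = idm S]).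

Definition is_kernel (X Y Z : C) (f : hom X Y) (g : hom Y Z) : Prop :=
  comp g f = 0 /\
  forall W (h : hom W Y), comp g h = 0 ->
    exists u : hom W X, comp f u = h /\ forall u' : hom W X, comp f u' = h -> u' = u.

Definition is_cokernel (X Y Z : C) (f : hom X Y) (g : hom Y Z) : Prop :=
  comp g f = 0 /\
  forall W (h : hom Y W), comp h f = 0 ->
    exists u : hom Z W, comp u g = h /\ forall u' : hom Z W, comp u' g = h -> u' = u.

Definition is_kcpair (X Y Z : C) (f : hom X Y) (g : hom Y Z) : Prop :=
  is_kernel f g /\ is_cokernel f g.

Definition confl_class := forall X Y Z : C, hom X Y -> hom Y Z -> Prop.

Section Exact.
Variable E : confl_class.

Definition inflation (X Y : C) (f : hom X Y) : Prop := exists Z (g : hom Y Z), E f g.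
Definition deflation (Y Z : C) (g : hom Y Z) : Prop := exists X (f : hom X Y), E f g.

Definition is_pushout (A B A' B' : C) (f : hom A B) (t : hom A A') (f' : hom A' B')
    (t' : hom B B') : Prop :=
  comp t' f = comp f' t /\
  forall W (x : hom B W) (y : hom A' W), comp x f = comp y t ->
    exists u : hom B' W, (comp u t' = x /\ comp u f' = y) /\
      forall u' : hom B' W, comp u' t' = x -> comp u' f' = y -> u' = u.

Definition is_pullback (B' C' B C0 : C) (g' : hom B' C') (t' : hom B' B) (g : hom B C0)
    (t : hom C' C0) : Prop :=
  comp g t' = comp t g' /\
  forall W (x : hom W B) (y : hom W C'), comp g x = comp t y ->
    exists u : hom W B', (comp t' u = x /\ comp g' u = y) /\
      forall u' : hom W B', comp t' u' = x -> comp g' u' = y -> u' = u.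

Definition is_exact_structure : Prop :=
  [/\ (forall X Y Z (f : hom X Y) (g : hom Y Z), E f g -> is_kcpair f g),
      (forall X Y Z X' Y' Z' (f : hom X Y) (g : hom Y Z) (f' : hom X' Y')
          (g' : hom Y' Z') (a : hom X X') (b : hom Y Y') (c : hom Z Z'),
          E f g -> is_iso a -> is_iso b -> is_iso c ->
          comp f' a = comp b f -> comp g' b = comp c g -> E f' g'),
      (forall X : C, inflation (idm X)) /\ (forall X : C, deflation (idm X)),
      (forall X Y Z (f : hom X Y) (f' : hom Y Z),
          inflation f -> inflation f' -> inflation (comp f' f)) /\
      (forall X Y Z (g : hom X Y) (g' : hom Y Z),
          deflation g -> deflation g' -> deflation (comp g' g)) &
      (forall A B A' (f : hom A B) (t : hom A A'), inflation f ->
          exists B' (f' : hom A' B') (t' : hom B B'),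
            is_pushout f t f' t' /\ inflation f') /\
      (forall B C0 C' (g : hom B C0) (t : hom C' C0), deflation g ->
          exists B' (g' : hom B' C') (t' : hom B' B),
            is_pullback g' t' g t /\ deflation g')].

Definition idempotent_complete : Prop :=
  forall X (e : hom X X), comp e e = e -> exists K (k : hom K X), is_kernel k e.

(* Hom(P,-) exact on conflations *)
Definition is_projective (P : C) : Prop :=
  forall X Y Z (f : hom X Y) (g : hom Y Z), E f g ->
    [/\ (forall h : hom P X, comp f h = 0 -> h = 0),
        (forall h : hom P Y, comp g h = 0 -> exists h' : hom P X, comp f h' = h) &
        (forall h : hom P Z, exists h' : hom P Y, comp g h' = h)].

(* Hom(-,I) exact on conflations *)
Definition is_injective (I : C) : Prop :=
  forall X Y Z (f : hom X Y) (g : hom Y Z), E f g ->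
    [/\ (forall h : hom Z I, comp h g = 0 -> h = 0),
        (forall h : hom Y I, comp h f = 0 -> exists h' : hom Z I, comp h' g = h) &
        (forall h : hom X I, exists h' : hom Y I, comp h' f = h)].

Definition enough_projectives : Prop :=
  forall Z : C, exists (P X : C) (f : hom X P) (g : hom P Z), is_projective P /\ E f g.

Definition enough_injectives : Prop :=
  forall X : C, exists (I Z : C) (f : hom X I) (g : hom I Z), is_injective I /\ E f g.

(* Ext^1(X,Y) = 0 : every conflation 0 -> Y -> M -> X -> 0 splits *)
Definition Ext1_zero (X Y : C) : Prop :=
  forall M (f : hom Y M) (g : hom M X), E f g -> exists s : hom X M, comp g s = idm X.

Fixpoint syzygy (k : nat) (X Z : C) : Prop :=
  match k with
  | 0%N => exists a : hom Z X, is_iso a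
  | k'.+1 => exists (W P : C) (f : hom Z P) (g : hom P W),
      syzygy k' X W /\ is_projective P /\ E f g
  end.

(* Ext^k(X,Y) = 0 for k >= 1, via Ext^k(X,Y) = Ext^1(X_{k-1},Y) *)
Definition Ext_zero (k : nat) (X Y : C) : Prop :=
  forall Z, syzygy k.-1 X Z -> Ext1_zero Z Y.

Definition perp (T : C -> Prop) (A : C) : Prop :=
  forall X, T X -> forall i : nat, (0 < i)%N -> Ext_zero i X A.

Definition pd_le (T : C -> Prop) (n : nat) : Prop :=
  forall X, T X -> forall i : nat, (n < i)%N -> forall Y, Ext_zero i X Y.

(* add(T): direct summands of finite direct sums of objects of T *)
Definition addT (T : C -> Prop) (X : C) : Prop :=
  exists (k : nat) (Ti : 'I_k -> C) (s : forall i, hom X (Ti i)) (r : forall i, hom (Ti i) X),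
    (forall i, T (Ti i)) /\ \sum_(i < k) comp (r i) (s i) = idm X.

Definition add_closed (T : C -> Prop) : Prop := forall X, T X <-> addT T X.

(* chain m A : conflations 0 -> K_i -> X_i -> K_{i+1} -> 0, 0<=i<=m,
   K_0 = A, K_{m+1} = 0, X_i in T *)
Fixpoint coreschain (T : C -> Prop) (m : nat) (A : C) : Prop :=
  match m with
  | 0%N => exists (X K : C) (f : hom A X) (g : hom X K), T X /\ E f g /\ is_zero_obj K
  | m'.+1 => exists (X K : C) (f : hom A X) (g : hom X K), T X /\ E f g /\ coreschain T m' K
  end.

Definition Tvee_n (T : C -> Prop) (n : nat) (A : C) : Prop :=
  exists m : nat, (m <= n)%N /\ coreschain T m A.

Definition Tvee (T : C -> Prop) (A : C) : Prop := exists n, Tvee_n T n A.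

Definition rel_generator (w Y : C -> Prop) : Prop :=
  (forall X, w X -> Y X) /\
  forall X, Y X -> exists (Y' W : C) (f : hom Y' W) (g : hom W X), w W /\ Y Y' /\ E f g.

Definition precovering (T Y : C -> Prop) : Prop :=
  forall X, Y X -> exists (T0 : C) (f : hom T0 X),
    T T0 /\ forall T' (h : hom T' X), T T' -> exists h' : hom T' T0, comp f h' = h.

Definition small_tilting (n : nat) (T : C -> Prop) : Prop :=
  [/\ add_closed T, pd_le T n, (forall X, T X -> perp T X),
      (exists w : C -> Prop, (forall X, w X -> Tvee T X) /\ rel_generator w (fun _ => True))
    & precovering T (perp T)].

Definition ZZ_tilting (n : nat) (T : C -> Prop) : Prop :=
  [/\ add_closed T, pd_le T n & rel_generator T (perp T)].

Definition AS_tilting (n : nat) (T : C -> Prop) : Prop :=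
  [/\ add_closed T, pd_le T n, (forall X, T X -> perp T X)
    & forall P, is_projective P -> Tvee T P].

End Exact.
End Defs.

(* Everything rests on an Auslander-Buchweitz type approximation: when [T] is a relative
   generator in [T^perp], every [A] with [Ext^i(T, A) = 0] for [i > k] is the start of a
   conflation [A -> U -> V] with [U] in [T^perp] and [V] coresolved by [k] objects of [T].
   For a projective [P] and [pd T <= n] this gives [P -> U -> V] with [Ext^1(U, T^perp) = 0],
   so the [T]-generator conflation ending in [U] splits, [U] lies in [T], and [P] lies in
   [T^vee_n]; thus Zhu-Zhuang tilting yields the small and Auslander-Solberg conditions.
   Conversely, a [T]-precover [T0 -> Y] of [Y] in [T^perp] becomes a deflation after
   precomposition with a map from an object of [T^vee] (maps into [T^perp] extend along
   [T]-coresolutions); by idempotent completeness and Buehler's obscure axiom it is itself a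
   deflation, and a Wakamatsu-type argument puts its kernel in [T^perp]. *)

From mathcomp Require Import all_boot all_algebra.
Set Implicit Arguments. Unset Strict Implicit. Unset Printing Implicit Defensive.
Import GRing.Theory.
Local Open Scope ring_scope.

Local Notation "g ⊚ f" := (comp g f) (at level 40, left associativity).

Section Preadditive.
Variable C : PreAddCat.
Implicit Types X Y Z W : C.

Lemma comp0l X Y Z (f : hom X Y) : (0 : hom Y Z) ⊚ f = 0.
Proof. by apply: (@addrI _ (0 ⊚ f)); rewrite -compDl !addr0. Qed.

Lemma comp0r X Y Z (g : hom Y Z) : g ⊚ (0 : hom X Y) = 0.
Proof. by apply: (@addrI _ (g ⊚ 0)); rewrite -compDr !addr0. Qed.

Lemma compNl X Y Z (g : hom Y Z) (f : hom X Y) : (- g) ⊚ f = - (g ⊚ f).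
Proof. by apply/eqP; rewrite -subr_eq0 opprK -compDl addNr comp0l. Qed.

Lemma compNr X Y Z (g : hom Y Z) (f : hom X Y) : g ⊚ (- f) = - (g ⊚ f).
Proof. by apply/eqP; rewrite -subr_eq0 opprK -compDr addNr comp0r. Qed.

Lemma compBl X Y Z (g g' : hom Y Z) (f : hom X Y) : (g - g') ⊚ f = g ⊚ f - g' ⊚ f.
Proof. by rewrite compDl compNl. Qed.

Lemma compBr X Y Z (g : hom Y Z) (f f' : hom X Y) : g ⊚ (f - f') = g ⊚ f - g ⊚ f'.
Proof. by rewrite compDr compNr. Qed.

Lemma is_iso_id X : is_iso (idm X).
Proof. by exists (idm X); rewrite comp1m. Qed.

Section KernelCokernel.
Variables (X Y Z : C) (f : hom X Y) (g : hom Y Z).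

Lemma kernel_mono W (x y : hom W X) : is_kernel f g -> f ⊚ x = f ⊚ y -> x = y.
Proof.
case=> gf0 univ fxy; have /univ[u [_ u_uniq]] : g ⊚ (f ⊚ x) = 0.
  by rewrite compA gf0 comp0l.
by rewrite (u_uniq x erefl) (u_uniq y (esym fxy)).
Qed.

Lemma cokernel_epi W (x y : hom Z W) : is_cokernel f g -> x ⊚ g = y ⊚ g -> x = y.
Proof.
case=> gf0 univ xgy; have /univ[u [_ u_uniq]] : x ⊚ g ⊚ f = 0.
  by rewrite -compA gf0 comp0r.
by rewrite (u_uniq x erefl) (u_uniq y (esym xgy)).
Qed.

Lemma kernel_factor W (h : hom W Y) :
  is_kernel f g -> g ⊚ h = 0 -> exists u, f ⊚ u = h.
Proof. by case=> _ univ /univ[u [? _]]; exists u. Qed.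

Lemma cokernel_factor W (h : hom Y W) :
  is_cokernel f g -> h ⊚ f = 0 -> exists u, u ⊚ g = h.
Proof. by case=> _ univ /univ[u [? _]]; exists u. Qed.

End KernelCokernel.

Section Squares.
Variables (B C0 B' C' : C) (g' : hom B' C') (t' : hom B' B) (g : hom B C0) (t : hom C' C0).
Hypothesis pb : is_pullback g' t' g t.

Lemma pullback_factor W (x : hom W B) (y : hom W C') :
  g ⊚ x = t ⊚ y -> exists u, t' ⊚ u = x /\ g' ⊚ u = y.
Proof. by case: pb => _ univ /univ[u [? _]]; exists u. Qed.

Lemma pullback_uniq W (u1 u2 : hom W B') :
  t' ⊚ u1 = t' ⊚ u2 -> g' ⊚ u1 = g' ⊚ u2 -> u1 = u2.
Proof.
case: pb => sq univ e1 e2; have /univ[u [_ u_uniq]] : g ⊚ (t' ⊚ u1) = t ⊚ (g' ⊚ u1).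
  by rewrite !compA sq.
by rewrite (u_uniq u1 erefl erefl) (u_uniq u2 (esym e1) (esym e2)).
Qed.

Lemma pullback_sym : is_pullback t' g' t g.
Proof.
case: pb => sq univ; split=> [|W x y /esym/univ[u [[? ?] u_uniq]]]; first by rewrite sq.
by exists u; split=> // u' ? ?; apply: u_uniq.
Qed.

End Squares.

Section CoSquares.
Variables (A B A' B' : C) (f : hom A B) (t : hom A A') (f' : hom A' B') (t' : hom B B').
Hypothesis po : is_pushout f t f' t'.

Lemma pushout_factor W (x : hom B W) (y : hom A' W) :
  x ⊚ f = y ⊚ t -> exists u, u ⊚ t' = x /\ u ⊚ f' = y.
Proof. by case: po => _ univ /univ[u [? _]]; exists u. Qed.

Lemma pushout_uniq W (u1 u2 : hom B' W) :
  u1 ⊚ t' = u2 ⊚ t' -> u1 ⊚ f' = u2 ⊚ f' -> u1 = u2.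
Proof.
case: po => sq univ e1 e2; have /univ[u [_ u_uniq]] : u1 ⊚ t' ⊚ f = u1 ⊚ f' ⊚ t.
  by rewrite -!compA sq.
by rewrite (u_uniq u1 erefl erefl) (u_uniq u2 (esym e1) (esym e2)).
Qed.

End CoSquares.

Record biproduct (X Y : C) := Biproduct {
  bp_obj : C;
  bp_in1 : hom X bp_obj;
  bp_in2 : hom Y bp_obj;
  bp_out1 : hom bp_obj X;
  bp_out2 : hom bp_obj Y;
  bp_out1_in1 : bp_out1 ⊚ bp_in1 = idm X;
  bp_out2_in2 : bp_out2 ⊚ bp_in2 = idm Y;
  bp_out1_in2 : bp_out1 ⊚ bp_in2 = 0;
  bp_out2_in1 : bp_out2 ⊚ bp_in1 = 0;
  bp_split : bp_in1 ⊚ bp_out1 + bp_in2 ⊚ bp_out2 = idm bp_obj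
}.

Lemma additive_biproduct X Y : is_additive C -> inhabited (biproduct X Y).
Proof.
by case=> _ /(_ X Y) [S [i1 [i2 [p1 [p2 [? ? ? ? ?]]]]]]; constructor; exists S i1 i2 p1 p2.
Qed.

End Preadditive.

Section ExactCategory.
Variables (C : PreAddCat) (E : confl_class C).
Hypothesis HE : is_exact_structure E.
Implicit Types X Y Z W : C.

Lemma conflation_kcpair X Y Z (f : hom X Y) (g : hom Y Z) : E f g -> is_kcpair f g.
Proof. by case: HE => H _ _ _ _; apply: H. Qed.

Lemma conflation_kernel X Y Z (f : hom X Y) (g : hom Y Z) : E f g -> is_kernel f g.
Proof. by case/conflation_kcpair. Qed.

Lemma conflation_cokernel X Y Z (f : hom X Y) (g : hom Y Z) : E f g -> is_cokernel f g.
Proof. by case/conflation_kcpair. Qed.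

Lemma conflation_comp0 X Y Z (f : hom X Y) (g : hom Y Z) : E f g -> g ⊚ f = 0.
Proof. by case/conflation_kernel. Qed.

Lemma conflation_iso X Y Z X' Y' Z' (f : hom X Y) (g : hom Y Z) (f' : hom X' Y')
    (g' : hom Y' Z') (a : hom X X') (b : hom Y Y') (c : hom Z Z') :
  E f g -> is_iso a -> is_iso b -> is_iso c ->
  f' ⊚ a = b ⊚ f -> g' ⊚ b = c ⊚ g -> E f' g'.
Proof. by case: HE => _ H _ _ _; apply: H. Qed.

Lemma deflation_comp X Y Z (g : hom X Y) (g' : hom Y Z) :
  deflation E g -> deflation E g' -> deflation E (g' ⊚ g).
Proof. by case: HE => _ _ _ [_ H] _; apply: H. Qed.

Lemma pushout_exists A B A' (f : hom A B) (t : hom A A') : inflation E f ->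
  exists B' (f' : hom A' B') (t' : hom B B'), is_pushout f t f' t' /\ inflation E f'.
Proof. by case: HE => _ _ _ _ [H _]; apply: H. Qed.

Lemma pullback_exists B C0 C' (g : hom B C0) (t : hom C' C0) : deflation E g ->
  exists B' (g' : hom B' C') (t' : hom B' B), is_pullback g' t' g t /\ deflation E g'.
Proof. by case: HE => _ _ _ _ [_ H]; apply: H. Qed.

Lemma conflation_idm_zero X : exists Z (g : hom X Z), E (idm X) g /\ is_zero_obj Z.
Proof.
case: HE => _ _ [/(_ X) [Z [g Eg]] _] _ _; exists Z, g; split=> //.
have g0 : g = 0 by rewrite -(compm1 g) (conflation_comp0 Eg).
have from0 W (h : hom Z W) : h = 0.
  by apply: (cokernel_epi (conflation_cokernel Eg)); rewrite g0 comp0r comp0l.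
by split=> // W h; rewrite -(comp1m h) (from0 _ (idm Z)) comp0l.
Qed.

Lemma conflation_of_kernel X X' Y Z (f : hom X Y) (f' : hom X' Y) (g : hom Y Z) :
  E f g -> is_kernel f' g -> E f' g.
Proof.
move=> Efg kf'; have kf := conflation_kernel Efg.
have [u fu] := kernel_factor kf (proj1 kf').
have [w f'w] := kernel_factor kf' (proj1 kf).
apply: (conflation_iso (a := w) (b := idm Y) (c := idm Z) Efg); last 2 first.
- by rewrite f'w comp1m.
- by rewrite comp1m compm1.
- exists u; split.
  + by apply: (kernel_mono kf); rewrite compA fu f'w compm1.
  + by apply: (kernel_mono kf'); rewrite compA f'w fu compm1.
- exact: is_iso_id.
- exact: is_iso_id.
Qed.

Lemma conflation_of_cokernel X Y Z Z' (f : hom X Y) (g : hom Y Z) (g' : hom Y Z') :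
  E f g -> is_cokernel f g' -> E f g'.
Proof.
move=> Efg cg'; have cg := conflation_cokernel Efg.
have [u ug] := cokernel_factor cg (proj1 cg').
have [w wg'] := cokernel_factor cg' (proj1 cg).
apply: (conflation_iso (a := idm X) (b := idm Y) (c := u) Efg); last 2 first.
- by rewrite comp1m compm1.
- by rewrite compm1 ug.
- exact: is_iso_id.
- exact: is_iso_id.
- exists w; split.
  + by apply: (cokernel_epi cg); rewrite -compA ug wg' comp1m.
  + by apply: (cokernel_epi cg'); rewrite -compA wg' ug comp1m.
Qed.

Lemma deflation_comp_iso Y Y' Z (g : hom Y Z) (phi : hom Y' Y) :
  deflation E g -> is_iso phi -> deflation E (g ⊚ phi).
Proof.
case=> K [k Ekg] [psi [psiphi phipsi]]; exists K, (psi ⊚ k).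
apply: (conflation_iso (a := idm K) (b := psi) (c := idm Z) Ekg).
- exact: is_iso_id.
- by exists phi.
- exact: is_iso_id.
- by rewrite compm1.
- by rewrite -compA phipsi compm1 comp1m.
Qed.

Lemma inflation_iso_comp X Y Y' (f : hom X Y) (phi : hom Y Y') :
  inflation E f -> is_iso phi -> inflation E (phi ⊚ f).
Proof.
case=> Z [g Efg] [psi [psiphi phipsi]]; exists Z, (g ⊚ psi).
apply: (conflation_iso (a := idm X) (b := phi) (c := idm Z) Efg).
- exact: is_iso_id.
- by exists psi.
- exact: is_iso_id.
- by rewrite compm1.
- by rewrite -compA psiphi compm1 comp1m.
Qed.

Lemma conflation_split_of_retraction X Y Z (f : hom X Y) (g : hom Y Z) (r : hom Y X) :
  E f g -> r ⊚ f = idm X -> exists s, g ⊚ s = idm Z.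
Proof.
move=> Efg rf; have cg := conflation_cokernel Efg.
have /(cokernel_factor cg) [s sg] : (idm Y - f ⊚ r) ⊚ f = 0.
  by rewrite compBl comp1m -compA rf compm1 subrr.
exists s; apply: (cokernel_epi cg).
by rewrite -compA sg compBr compm1 compA (conflation_comp0 Efg) comp0l subr0 comp1m.
Qed.

Lemma conflation_retraction_of_split X Y Z (f : hom X Y) (g : hom Y Z) (s : hom Z Y) :
  E f g -> g ⊚ s = idm Z -> exists r, r ⊚ f = idm X.
Proof.
move=> Efg gs; have kf := conflation_kernel Efg.
have /(kernel_factor kf) [r fr] : g ⊚ (idm Y - s ⊚ g) = 0.
  by rewrite compBr compm1 compA gs comp1m subrr.
exists r; apply: (kernel_mono kf).
by rewrite compA fr compBl comp1m -compA (conflation_comp0 Efg) comp0r subr0 compm1.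
Qed.

Lemma pullback_deflation B C0 B' C' (g' : hom B' C') (t' : hom B' B) (g : hom B C0)
    (t : hom C' C0) :
  deflation E g -> is_pullback g' t' g t -> deflation E g'.
Proof.
move=> /(pullback_exists t) [B2 [g2 [t2 [pb2 defl_g2]]]] pb.
have [u [t2u g2u]] := pullback_factor pb2 (proj1 pb).
have [v [t'v g'v]] := pullback_factor pb (proj1 pb2).
rewrite -g2u; apply: (deflation_comp_iso defl_g2); exists v; split.
- by apply: (pullback_uniq pb); rewrite compm1 compA ?t'v ?g'v.
- by apply: (pullback_uniq pb2); rewrite compm1 compA ?t2u ?g2u.
Qed.

Lemma pushout_inflation A B A' B' (f : hom A B) (t : hom A A') (f' : hom A' B')
    (t' : hom B B') :
  inflation E f -> is_pushout f t f' t' -> inflation E f'.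
Proof.
move=> /(pushout_exists t) [B2 [f2 [t2 [po2 infl_f2]]]] po.
have [u [ut' uf']] := pushout_factor po (proj1 po2).
have [v [vt2 vf2]] := pushout_factor po2 (proj1 po).
rewrite -vf2; apply: (inflation_iso_comp infl_f2); exists u; split.
- by apply: (pushout_uniq po2); rewrite comp1m -compA ?vt2 ?vf2.
- by apply: (pushout_uniq po); rewrite comp1m -compA ?ut' ?uf'.
Qed.

Lemma pullback_conflation B C0 B' C' K (k : hom K B) (g : hom B C0) (g' : hom B' C')
    (t' : hom B' B) (t : hom C' C0) :
  E k g -> is_pullback g' t' g t -> exists k' : hom K B', t' ⊚ k' = k /\ E k' g'.
Proof.
move=> Ekg pb; have kk := conflation_kernel Ekg.
have [K2 [k2 Ek2]] : deflation E g' by apply: pullback_deflation pb; exists K, k.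
have [k' [t'k' g'k']] : exists k', t' ⊚ k' = k /\ g' ⊚ k' = 0.
  by apply: (pullback_factor pb); rewrite (conflation_comp0 Ekg) comp0r.
exists k'; split=> //; apply: (conflation_of_kernel Ek2); split=> // W h g'h.
have /(kernel_factor kk) [x kx] : g ⊚ (t' ⊚ h) = 0.
  by rewrite compA (proj1 pb) -compA g'h comp0r.
have k'x : k' ⊚ x = h.
  by apply: (pullback_uniq pb); rewrite compA ?t'k' ?g'k' ?kx ?comp0l.
exists x; split=> // u' k'u'.
by apply: (kernel_mono kk); rewrite -t'k' -!compA k'u' k'x.
Qed.

Lemma pushout_conflation A B A' B' C0 (f : hom A B) (g : hom B C0) (t : hom A A')
    (f' : hom A' B') (t' : hom B B') :
  E f g -> is_pushout f t f' t' -> exists g' : hom B' C0, g' ⊚ t' = g /\ E f' g'.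
Proof.
move=> Efg po; have cg := conflation_cokernel Efg.
have [Z2 [g2 Eg2]] : inflation E f' by apply: pushout_inflation po; exists C0, g.
have [g' [g't' g'f']] : exists g', g' ⊚ t' = g /\ g' ⊚ f' = 0.
  by apply: (pushout_factor po); rewrite (conflation_comp0 Efg) comp0l.
exists g'; split=> //; apply: (conflation_of_cokernel Eg2); split=> // W h hf'.
have /(cokernel_factor cg) [x xg] : h ⊚ t' ⊚ f = 0.
  by rewrite -compA (proj1 po) compA hf' comp0l.
have xg' : x ⊚ g' = h.
  by apply: (pushout_uniq po); rewrite -compA ?g't' ?g'f' ?xg ?comp0r.
exists x; split=> // u' u'g'.
by apply: (cokernel_epi cg); rewrite -g't' !compA u'g' xg'.
Qed.

Lemma pullback_deflation_conflation A1 U1 V1 T0 W (a : hom A1 U1) (b : hom U1 V1)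
    (g : hom T0 U1) (gW : hom W A1) (tW : hom W T0) :
  E a b -> deflation E g -> is_pullback gW tW g a -> E tW (b ⊚ g).
Proof.
move=> Eab defl_g pb; have ka := conflation_kernel Eab.
have [K [k Ek]] : deflation E (b ⊚ g) by apply: deflation_comp defl_g _; exists A1, a.
apply: (conflation_of_kernel Ek); split.
  by rewrite -compA (proj1 pb) compA (conflation_comp0 Eab) comp0l.
move=> X h bgh; have /(kernel_factor ka) [x ax] : b ⊚ (g ⊚ h) = 0 by rewrite compA.
have [u [tWu gWu]] := pullback_factor pb (esym ax).
exists u; split=> // u' tWu'; apply: (pullback_uniq pb); first by rewrite tWu.
by apply: (kernel_mono ka); rewrite !compA -(proj1 pb) -!compA tWu tWu'.
Qed.

End ExactCategory.

Section ObscureAxiom.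
Variables (C : PreAddCat) (E : confl_class C).
Hypothesis HE : is_exact_structure E.
Variables (A B C0 : C) (v : hom A B) (f : hom B C0).

Lemma kernel_of_deflation_comp : idempotent_complete C -> deflation E (f ⊚ v) ->
  exists L (i : hom L B), is_kernel i f.
Proof.
(* [s t'] is an idempotent on the pullback [Q] of [f v] along [f]; the image in [B] of its
   kernel is a kernel of [f]. *)
move=> IC /(pullback_exists HE f) [Q [g' [t' [pb _]]]].
have [s [t's g's]] : exists s, t' ⊚ s = idm A /\ g' ⊚ s = v.
  by apply: (pullback_factor pb); rewrite compm1.
have /IC[L [k kk]] : s ⊚ t' ⊚ (s ⊚ t') = s ⊚ t'.
  by rewrite -compA (compA t') t's comp1m.
have t'k : t' ⊚ k = 0.
  by rewrite -[t']comp1m -t's -!compA (compA s) (proj1 kk) comp0r.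
exists L, (g' ⊚ k); split; first by rewrite compA -(proj1 pb) -compA t'k comp0r.
move=> W h fh; have [u [t'u g'u]] : exists u, t' ⊚ u = 0 /\ g' ⊚ u = h.
  by apply: (pullback_factor pb); rewrite comp0r fh.
have /(kernel_factor kk) [x kx] : s ⊚ t' ⊚ u = 0 by rewrite -compA t'u comp0r.
exists x; split=> [|x' g'kx']; first by rewrite -compA kx.
apply: (kernel_mono kk); rewrite kx; apply: (pullback_uniq pb).
  by rewrite compA t'k comp0l t'u.
by rewrite compA g'kx' g'u.
Qed.

Lemma biproduct_kernel_pullback L (i : hom L B) (b : biproduct A L) :
  is_kernel i f -> is_pullback (v ⊚ bp_out1 b + i ⊚ bp_out2 b) (bp_out1 b) (f ⊚ v) f.
Proof.
move=> ki; split.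
  by rewrite compDr !compA (proj1 ki) comp0l addr0.
move=> W x y fvx; have /(kernel_factor ki) [z iz] : f ⊚ (y - v ⊚ x) = 0.
  by rewrite compBr compA fvx subrr.
exists (bp_in1 b ⊚ x + bp_in2 b ⊚ z); split.
  rewrite !compDr !compDl -!compA !(compA _ (bp_in1 b)) !(compA _ (bp_in2 b)).
  rewrite bp_out1_in1 bp_out1_in2 bp_out2_in1 bp_out2_in2 !comp0l !comp1m !comp0r.
  by rewrite !addr0 !add0r iz subrKC.
move=> u' out1u' viu'; have out2u' : bp_out2 b ⊚ u' = z.
  by apply: (kernel_mono ki); rewrite iz -viu' compDl -!compA out1u' addrC addKr.
by rewrite -[u']comp1m -(bp_split b) compDl -!compA out1u' out2u'.
Qed.

(** Pulling back the deflation [f v] along [f] yields a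
    deflation [A (+) L -> B] whose kernel [k'] exhibits [B] as the pushout of the
    inflation [k : K -> A] along [- out2 k' : K -> L]. *)
Lemma conflation_of_kernel_deflation_comp L (i : hom L B) :
  is_additive C -> is_kernel i f -> deflation E (f ⊚ v) -> E i f.
Proof.
move=> Hadd ki [K [k Ek]]; have [b] := additive_biproduct A L Hadd.
set out1 := bp_out1 b; set out2 := bp_out2 b; set vi := v ⊚ out1 + i ⊚ out2.
have [k' [out1k' Ek'vi]] := pullback_conflation HE Ek (biproduct_kernel_pullback b ki).
have cvi := conflation_cokernel HE Ek'vi.
have vi_in1 : vi ⊚ bp_in1 b = v.
  by rewrite /vi compDl -!compA bp_out1_in1 bp_out2_in1 comp0r compm1 addr0.
have vi_in2 : vi ⊚ bp_in2 b = i.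
  by rewrite /vi compDl -!compA bp_out1_in2 bp_out2_in2 comp0r compm1 add0r.
have po : is_pushout k (- (out2 ⊚ k')) i v.
  split.
    apply/eqP; rewrite compNr -addr_eq0 -out1k' !compA -compDl.
    by rewrite (conflation_comp0 HE Ek'vi).
  move=> W x y xk; have /(cokernel_factor cvi) [u uvi] : (x ⊚ out1 + y ⊚ out2) ⊚ k' = 0.
    by rewrite compDl -!compA out1k' xk compNr addNr.
  exists u; split.
    by rewrite -vi_in1 -vi_in2 !compA uvi !compDl -!compA bp_out1_in1 bp_out2_in1
      bp_out1_in2 bp_out2_in2 !comp0r !compm1 addr0 add0r.
  move=> u' u'v u'i; apply: (cokernel_epi cvi); rewrite uvi /vi compDr !compA.
  by rewrite u'v u'i.
have [g' [g'v Eig']] := pushout_conflation HE Ek po.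
suff -> : f = g' by [].
apply: (pushout_uniq po); first by rewrite g'v.
by rewrite (proj1 ki) (conflation_comp0 HE Eig').
Qed.

Lemma deflation_of_deflation_comp :
  is_additive C -> idempotent_complete C -> deflation E (f ⊚ v) ->
  exists L (i : hom L B), E i f.
Proof.
move=> Hadd IC defl; have [L [i ki]] := kernel_of_deflation_comp IC defl.
by exists L, i; apply: conflation_of_kernel_deflation_comp.
Qed.

End ObscureAxiom.

Section Ext1.
Variables (C : PreAddCat) (E : confl_class C).
Hypothesis HE : is_exact_structure E.
Implicit Types X Y Z : C.

Lemma Ext1_zero_projective P Y : is_projective E P -> Ext1_zero E P Y.
Proof.
move=> projP M f g Efg; have [_ _ lift] := projP _ _ _ _ _ Efg.
by have [s gs] := lift (idm P); exists s.
Qed.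

Lemma Ext1_zero_injective Z I : is_injective E I -> Ext1_zero E Z I.
Proof.
move=> injI M f g Efg; have [_ _ extend] := injI _ _ _ _ _ Efg.
have [r rf] := extend (idm I); exact (conflation_split_of_retraction HE Efg rf).
Qed.

Lemma Ext1_zero_zero_obj Z Y : is_zero_obj Z -> Ext1_zero E Z Y.
Proof. by move=> [Z0 _] M f g _; exists 0; rewrite comp0r (Z0 _ (idm Z)). Qed.

Lemma Ext1_zero_lift K I K' Z (a : hom K I) (p : hom I K') (phi : hom Z K') :
  E a p -> Ext1_zero E Z K -> exists psi : hom Z I, p ⊚ psi = phi.
Proof.
move=> Eap ExtZK; have defl_p : deflation E p by exists K, a.
have [Q [g' [t' [pb _]]]] := pullback_exists HE phi defl_p.
have [k' [_ Ek'g']] := pullback_conflation HE Eap pb.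
have [s g's] := ExtZK _ _ _ Ek'g'.
by exists (t' ⊚ s); rewrite compA (proj1 pb) -compA g's compm1.
Qed.

Lemma Ext1_zero_extend O P Z Y (i : hom O P) (pi : hom P Z) (phi : hom O Y) :
  E i pi -> Ext1_zero E Z Y -> exists psi : hom P Y, psi ⊚ i = phi.
Proof.
move=> Eipi ExtZY; have infl_i : inflation E i by exists Z, pi.
have [B [f' [t' [po _]]]] := pushout_exists HE phi infl_i.
have [g' [_ Ef'g']] := pushout_conflation HE Eipi po.
have [s g's] := ExtZY _ _ _ Ef'g'.
have [r rf'] := conflation_retraction_of_split HE Ef'g' g's.
by exists (r ⊚ t'); rewrite -compA (proj1 po) compA rf' comp1m.
Qed.

Lemma Ext1_zero_of_extend O P Z Y (i : hom O P) (pi : hom P Z) :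
  E i pi -> is_projective E P -> (forall phi : hom O Y, exists psi, psi ⊚ i = phi) ->
  Ext1_zero E Z Y.
Proof.
move=> Eipi projP extend N f g Efg; have [_ _ lift] := projP _ _ _ _ _ Efg.
have [la gla] := lift pi; have cpi := conflation_cokernel HE Eipi.
have /(kernel_factor (conflation_kernel HE Efg)) [phi fphi] : g ⊚ (la ⊚ i) = 0.
  by rewrite compA gla (conflation_comp0 HE Eipi).
have [psi psii] := extend phi.
have /(cokernel_factor cpi) [s spi] : (la - f ⊚ psi) ⊚ i = 0.
  by rewrite compBl -compA psii fphi subrr.
exists s; apply: (cokernel_epi cpi).
by rewrite -compA spi compBr gla compA (conflation_comp0 HE Efg) comp0l subr0 comp1m.
Qed.

Lemma Ext1_zero_of_lift Y J Y' Z (j : hom Y J) (q : hom J Y') :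
  E j q -> is_injective E J -> (forall phi : hom Z Y', exists psi, q ⊚ psi = phi) ->
  Ext1_zero E Z Y.
Proof.
move=> Ejq injJ lift N f g Efg; have [_ _ extend] := injJ _ _ _ _ _ Efg.
have [h hf] := extend j; have kj := conflation_kernel HE Ejq.
have /(cokernel_factor (conflation_cokernel HE Efg)) [phi phig] : q ⊚ h ⊚ f = 0.
  by rewrite -compA hf (conflation_comp0 HE Ejq).
have [psi qpsi] := lift phi.
have /(kernel_factor kj) [r jr] : q ⊚ (h - psi ⊚ g) = 0.
  by rewrite compBr compA qpsi phig subrr.
apply: (conflation_split_of_retraction HE Efg (r := r)); apply: (kernel_mono kj).
by rewrite compA jr compBl hf -compA (conflation_comp0 HE Efg) comp0r subr0 compm1.
Qed.

Lemma Ext1_zero_shift K I K' Z' P Z (j : hom K I) (p : hom I K') (i : hom Z' P)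
    (pi : hom P Z) :
  E j p -> is_injective E I -> E i pi -> is_projective E P -> Ext1_zero E Z' K ->
  Ext1_zero E Z K'.
Proof.
move=> Ejp injI Eipi projP ExtZ'K; apply: (Ext1_zero_of_extend Eipi projP) => phi.
have [psi ppsi] := Ext1_zero_lift phi Ejp ExtZ'K.
have [_ _ extend] := injI _ _ _ _ _ Eipi; have [chi chii] := extend psi.
by exists (p ⊚ chi); rewrite -compA chii.
Qed.

Lemma Ext1_zero_extension_r Y' M X0 Z (a : hom Y' M) (b : hom M X0) :
  enough_projectives E -> E a b -> Ext1_zero E Z Y' -> Ext1_zero E Z X0 ->
  Ext1_zero E Z M.
Proof.
move=> EP Eab ExtZY' ExtZX0; have [P [O [i [pi [projP Eipi]]]]] := EP Z.
apply: (Ext1_zero_of_extend Eipi projP) => phi.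
have [psi psii] := Ext1_zero_extend (b ⊚ phi) Eipi ExtZX0.
have [_ _ lift] := projP _ _ _ _ _ Eab; have [psi' bpsi'] := lift psi.
have /(kernel_factor (conflation_kernel HE Eab)) [chi achi] : b ⊚ (phi - psi' ⊚ i) = 0.
  by rewrite compBr compA bpsi' psii subrr.
have [chi' chi'i] := Ext1_zero_extend chi Eipi ExtZY'.
by exists (psi' + a ⊚ chi'); rewrite compDl -compA chi'i achi addrC subrK.
Qed.

Lemma Ext1_zero_extension_l X0 U V Y (a : hom X0 U) (b : hom U V) :
  enough_injectives E -> E a b -> Ext1_zero E X0 Y -> Ext1_zero E V Y ->
  Ext1_zero E U Y.
Proof.
move=> EI Eab ExtX0Y ExtVY; have [J [Y' [j [q [injJ Ejq]]]]] := EI Y.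
apply: (Ext1_zero_of_lift Ejq injJ) => phi.
have [psi qpsi] := Ext1_zero_lift (phi ⊚ a) Ejq ExtX0Y.
have [_ _ extend] := injJ _ _ _ _ _ Eab; have [psi' psi'a] := extend psi.
have /(cokernel_factor (conflation_cokernel HE Eab)) [chi chib] : (phi - q ⊚ psi') ⊚ a = 0.
  by rewrite compBl -compA psi'a qpsi subrr.
have [chi' qchi'] := Ext1_zero_lift chi Ejq ExtVY.
by exists (psi' + chi' ⊚ b); rewrite compDr compA qchi' chib addrC subrK.
Qed.

End Ext1.

Section Tilting.
Variables (C : PreAddCat) (E : confl_class C) (T : C -> Prop).
Hypothesis HE : is_exact_structure E.
Hypothesis EP : enough_projectives E.
Hypothesis EI : enough_injectives E.
Implicit Types X Y Z : C.
Local Notation perpT := (perp E T).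

Lemma add_closed_retract X U (s : hom U X) (r : hom X U) :
  add_closed T -> T X -> r ⊚ s = idm U -> T U.
Proof.
move=> addT_T TX rs; apply/addT_T; exists 1%N, (fun=> X), (fun=> s), (fun=> r).
by rewrite big_ord1.
Qed.

Lemma perp_Ext1 X Y : perpT Y -> T X -> Ext1_zero E X Y.
Proof.
by move=> perpY TX; apply: (perpY X TX 1%N erefl X); exists (idm X); apply: is_iso_id.
Qed.

Lemma perp_injective I : is_injective E I -> perpT I.
Proof. by move=> injI X _ i _ Z _; apply: Ext1_zero_injective. Qed.

Lemma perp_extension Y' M X0 (a : hom Y' M) (b : hom M X0) :
  E a b -> perpT Y' -> perpT X0 -> perpT M.
Proof.
move=> Eab perpY' perpX0 X TX i i_gt0 Z syzZ.
have ExtY' := perpY' X TX i i_gt0 Z syzZ; have ExtX0 := perpX0 X TX i i_gt0 Z syzZ.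
exact: (Ext1_zero_extension_r HE EP Eab ExtY' ExtX0).
Qed.

Definition perp_gt (k : nat) (A : C) : Prop :=
  forall X, T X -> forall i, (k < i)%N -> Ext_zero E i X A.

Lemma perp_gt_cosyzygy k A I A1 (j : hom A I) (p : hom I A1) :
  perp_gt k.+1 A -> E j p -> is_injective E I -> perp_gt k A1.
Proof.
move=> perpA Ejp injI X TX i ki Z syzZ; have [P [O [io [pi [projP Eio]]]]] := EP Z.
apply: (Ext1_zero_shift HE Ejp injI Eio projP); apply: (perpA X TX i.+1 ki O).
by rewrite /= -(ltn_predK ki); exists Z, P, io, pi.
Qed.

Lemma perp_cosyzygy Y J Y' (j : hom Y J) (q : hom J Y') :
  perpT Y -> E j q -> is_injective E J -> perpT Y'.
Proof. by move=> perpY; apply: (@perp_gt_cosyzygy 0) => X TX i /ltnW; apply: perpY. Qed.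

(** [coresolved k V]: [V] has a [T]-coresolution with exactly [k] terms; for [k > 0] this
    is [coreschain E T k.-1 V], for [k = 0] it says that [V] is zero. *)
Definition coresolved (k : nat) (V : C) : Prop :=
  if k is k'.+1 then coreschain E T k' V else is_zero_obj V.

Lemma coresolvedS k W : coresolved k.+1 W <->
  exists X K (f : hom W X) (g : hom X K), T X /\ E f g /\ coresolved k K.
Proof. by case: k. Qed.

Lemma coresolved_Ext1_perp k V Y : coresolved k V -> perpT Y -> Ext1_zero E V Y.
Proof.
elim: k V Y => [|k IH] V Y; first by move=> V0 _; apply: Ext1_zero_zero_obj.
case/coresolvedS=> X [K [a [b [TX [Eab cK]]]]] perpY.
have [J [Y' [j [q [injJ Ejq]]]]] := EI Y.
apply: (Ext1_zero_of_lift HE Ejq injJ) => phi.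
have [psi psia] := Ext1_zero_extend HE phi Eab (IH K Y' cK (perp_cosyzygy perpY Ejq injJ)).
have [chi qchi] := Ext1_zero_lift HE psi Ejq (perp_Ext1 perpY TX).
by exists (chi ⊚ a); rewrite compA qchi psia.
Qed.

(* Induction on [k]: approximate the cosyzygy [A1] of [A], cover the middle term of that
   approximation by a [T]-generator conflation, and pull back twice. *)
Lemma perp_gt_approximation k A :
  rel_generator E T perpT -> perp_gt k A ->
  exists U V (a : hom A U) (b : hom U V), E a b /\ perpT U /\ coresolved k V.
Proof.
move=> [_ gen]; elim: k A => [|k IH] A perpA.
  have [Z [g [Eg Z0]]] := conflation_idm_zero HE A.
  by exists A, Z, (idm A), g.
have [I [A1 [j [p [injI Ejp]]]]] := EI A.
have [U1 [V1 [a1 [b1 [Eab1 [perpU1 cV1]]]]]] := IH A1 (perp_gt_cosyzygy perpA Ejp injI).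
have [Y' [T0 [f0 [g0 [TT0 [perpY' Efg0]]]]]] := gen U1 perpU1.
have defl_g0 : deflation E g0 by exists Y', f0.
have [W [gW [tW [pbW _]]]] := pullback_exists HE a1 defl_g0.
have [kY [_ EkY]] := pullback_conflation HE Efg0 pbW.
have defl_p : deflation E p by exists A, j.
have [M [m1 [m2 [pbM _]]]] := pullback_exists HE gW defl_p.
have [jA [_ EjA]] := pullback_conflation HE Ejp pbM.
have [kY' [_ EkY']] := pullback_conflation HE EkY (pullback_sym pbM).
exists M, W, jA, m1; split=> //; split.
  exact: perp_extension EkY' perpY' (perp_injective injI).
apply/coresolvedS; exists T0, V1, tW, (b1 ⊚ g0); split=> //; split=> //.
exact (pullback_deflation_conflation HE Eab1 defl_g0 pbW).
Qed.

Lemma ZZ_tilting_projective_Tvee n P :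
  ZZ_tilting E n T -> is_projective E P -> Tvee_n E T n P.
Proof.
move=> [addT_T pd gen] projP.
have [U [V [a [b [Eab [perpU cV]]]]]] :=
  perp_gt_approximation gen (fun X TX i ni => pd X TX i ni P).
have [Y' [T0 [f0 [g0 [TT0 [perpY' Efg0]]]]]] := gen.2 U perpU.
have [s g0s] : exists s, g0 ⊚ s = idm U.
  apply: (Ext1_zero_extension_l HE EI Eab _ (coresolved_Ext1_perp cV perpY') Efg0).
  exact: Ext1_zero_projective.
exists n; split=> //; apply/coresolvedS; exists U, V, a, b; split=> //.
exact: add_closed_retract addT_T TT0 g0s.
Qed.

Section Precover.
Variables (L T0 Y : C) (i : hom L T0) (f : hom T0 Y).
Definition precovers := forall T' (h : hom T' Y), T T' -> exists h' : hom T' T0, f ⊚ h' = h.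

Lemma precover_factor_syzygy k X Z (h : hom Z Y) : E i f -> perpT Y -> precovers ->
  T X -> syzygy E k X Z -> exists h', f ⊚ h' = h.
Proof.
move=> Eif perpY precf; case: k => [|k] TX /=.
  case=> a [a' [a'a aa']]; have [h' fh'] := precf _ (h ⊚ a') TX.
  by exists (h' ⊚ a); rewrite compA fh' -compA a'a compm1.
case=> W [P [i' [p' [syzW [projP Eip']]]]].
have [h1 h1i'] := Ext1_zero_extend HE h Eip' (perpY X TX k.+1 erefl W syzW).
have [_ _ lift] := projP _ _ _ _ _ Eif; have [h' fh'] := lift h1.
by exists (h' ⊚ i'); rewrite compA fh' h1i'.
Qed.

Lemma precover_kernel_perp : E i f -> perpT Y -> precovers -> perpT T0 -> perpT L.
Proof.
move=> Eif perpY precf perpT0 X TX k k_gt0 Z syzZ.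
have [P [O [io [pi [projP Eio]]]]] := EP Z; have ki := conflation_kernel HE Eif.
apply: (Ext1_zero_of_extend HE Eio projP) => phi.
have [psi psiio] := Ext1_zero_extend HE (i ⊚ phi) Eio (perpT0 X TX k k_gt0 Z syzZ).
have /(cokernel_factor (conflation_cokernel HE Eio)) [h hpi] : f ⊚ psi ⊚ io = 0.
  by rewrite -compA psiio compA (conflation_comp0 HE Eif) comp0l.
have [mu fmu] := precover_factor_syzygy h Eif perpY precf TX syzZ.
have /(kernel_factor ki) [psi' ipsi'] : f ⊚ (psi - mu ⊚ pi) = 0.
  by rewrite compBr compA fmu hpi subrr.
exists psi'; apply: (kernel_mono ki).
by rewrite compA ipsi' compBl psiio -compA (conflation_comp0 HE Eio) comp0r subr0.
Qed.

End Precover.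

Lemma small_tilting_rel_generator n :
  is_additive C -> idempotent_complete C -> small_tilting E n T -> rel_generator E T perpT.
Proof.
move=> Hadd IC [_ _ TperpT [w [wTvee [_ wgen]]] prec]; split=> // Y perpY.
have [T0 [f [TT0 precf]]] := prec Y perpY.
have [Y1 [W [e1 [e [wW [_ Ee]]]]]] := wgen Y I.
have [_ [m [_ /coresolvedS [X0 [K [a [b [TX0 [Eab cK]]]]]]]]] := wTvee W wW.
have [e' e'a] := Ext1_zero_extend HE e Eab (coresolved_Ext1_perp cK perpY).
have [u fu] := precf X0 e' TX0.
have [L [i Eif]] : exists L (i : hom L T0), E i f.
  apply: (deflation_of_deflation_comp HE (v := u ⊚ a)) => //.
  by rewrite compA fu e'a; exists Y1, e1.
exists L, T0, i, f; split=> //; split=> //.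
exact: precover_kernel_perp Eif perpY precf (TperpT T0 TT0).
Qed.

Lemma projectives_rel_generator (w : C -> Prop) :
  (forall P, is_projective E P -> w P) -> rel_generator E w (fun=> True).
Proof.
move=> projw; split=> // X _; have [P [O [f [g [projP Efg]]]]] := EP X.
by exists O, P, f, g; split; [apply: projw | split].
Qed.

Lemma ZZ_tilting_small n :
  ZZ_tilting E n T -> precovering T perpT -> small_tilting E n T.
Proof.
move=> ZZ prec; have [addT_T pd [TperpT _]] := ZZ; split=> //.
exists (is_projective E); split; last exact: projectives_rel_generator.
by move=> P /(ZZ_tilting_projective_Tvee ZZ); exists n.
Qed.

Lemma AS_tilting_small n :
  AS_tilting E n T -> precovering T perpT -> small_tilting E n T.
Proof.
move=> [addT_T pd TperpT projTvee] prec; split=> //.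
by exists (is_projective E); split; last exact: projectives_rel_generator.
Qed.

Lemma small_tilting_ZZ n : is_additive C -> idempotent_complete C ->
  small_tilting E n T -> ZZ_tilting E n T.
Proof.
move=> Hadd IC small; have [addT_T pd _ _ _] := small; split=> //.
exact: small_tilting_rel_generator small.
Qed.

Lemma small_tilting_AS n : is_additive C -> idempotent_complete C ->
  small_tilting E n T -> AS_tilting E n T.
Proof.
move=> Hadd IC small; have [addT_T pd TperpT _ _] := small; split=> // P projP.
by exists n; apply: ZZ_tilting_projective_Tvee projP; apply: small_tilting_ZZ.
Qed.

End Tilting.

Theorem theorem4p23 (C : PreAddCat) (E : confl_class C) (n : nat) (T : C -> Prop) :
  is_additive C -> is_exact_structure E -> idempotent_complete C ->
  enough_projectives E -> enough_injectives E ->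
  ((ZZ_tilting E n T /\ precovering T (perp E T)) <-> small_tilting E n T) /\
  (small_tilting E n T <-> (AS_tilting E n T /\ precovering T (perp E T))) /\
  ((ZZ_tilting E n T /\ precovering T (perp E T)) \/ small_tilting E n T \/
     (AS_tilting E n T /\ precovering T (perp E T)) ->
   forall P : C, is_projective E P -> Tvee_n E T n P).
Proof.
move=> Hadd HE IC EP EI; split; [|split].
- split=> [[ZZ prec] | small]; first exact: ZZ_tilting_small.
  by split; [apply: small_tilting_ZZ | case: small].
- split=> [small | [AS prec]]; last exact: AS_tilting_small.
  by split; [apply: small_tilting_AS | case: small].
- move=> tilting P projP; apply: (ZZ_tilting_projective_Tvee HE EP EI _ projP).
  case: tilting => [[] // | [small | [AS prec]]]; apply: small_tilting_ZZ => //.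
  exact: AS_tilting_small.
Qed.
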